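(* Let $f\in L^2(\Omega)$ and let $(u_h;\lambda_h)$, with $u_h=\{u_0,u_b,u_n\}$, be a solution of the primal-dual weak Galerkin scheme. Define the numerical flux $\mathbf{F}_h|_{\partial T}:=u_n\mathbf{n}$ on $\partial T$, for each $T\in\mathcal{T}_h$, where $\mathbf{n}$ is the unit outward normal of $T$. Then $\mathbf{F}_h$ is continuous in the normal direction across each interior edge/face: on $e=\partial T_1\cap\partial T_2$, $$\mathbf{F}_h|_{\partial T_1}\cdot\mathbf{n}_{T_1}+\mathbf{F}_h|_{\partial T_2}\cdot\mathbf{n}_{T_2}=0.$$ Moreover, for every $T\in\mathcal{T}_h$, $$-\int_{\partial T}\mathbf{F}_h\cdot\mathbf{n}\,ds=\int_T f\,dT.$$
   Context: Model problem. Let $\Omega\subset\mathbb{R}^d$ ($d=2,3$) be a bounded polygonal/polyhedral Lipschitz domain, with $\Gamma_D\subset\partial\Omega$ and $\Gamma_N=\partial\Omega\setminus\Gamma_D$. The problem is $$-\nabla\cdot(a\nabla u+\mathbf{b}u)=f,\qquad u=g_1\text{ on }\Gamma_D,\qquad (a\nabla u+\mathbf{b}u)\cdot\mathbf{n}=g_2\text{ on }\Gamma_N,$$ with $a$ symmetric uniformly positive definite, $\mathbf{b}$ bounded, and both $a$ and $\mathbf{b}$ piecewise constant on $\mathcal{T}_h$. Mesh and spaces. $\mathcal{T}_h$ is a shape-regular polygonal/polyhedral partition with $h_T=\mathrm{diam}\,T$. Fix $k\ge1$ and $l\in\{k-1,k\}$. $W_h$ consists of triplets $v=\{v_0,v_b,v_n\}$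 with $v_0|_T\in P_k(T)$, $v_b|_e\in P_k(e)$ and $v_n|_e\in P_l(e)$ on each edge/face $e\subset\partial T$. On each interior $e=\partial T_1\cap\partial T_2$, $v_b$ is single-valued and $v_n|_{\partial T_1}=-v_n|_{\partial T_2}$. Set $W_h^0=\{v\in W_h: v_b=0\text{ on }\Gamma_D,\ v_n=0\text{ on }\Gamma_N\}$. $M_h$ is the space of discontinuous piecewise $P_k$ functions. Weak gradient. $\nabla_w v|_T\in[P_{k-1}(T)]^d$ is defined by $$(\nabla_w v,\psi)_T=-(v_0,\nabla\cdot\psi)_T+\langle v_b,\psi\cdot\mathbf{n}\rangle_{\partial T}\quad\text{for all }\psi\in[P_{k-1}(T)]^d.$$ Bilinear forms. - $s(u,v)=\sum_T h_T^{-3}\langle u_0-u_b,v_0-v_b\rangle_{\partial T}+h_T^{-1}\langle(a\nabla u_0+\mathbf{b}u_0)\cdot\mathbf{n}-u_n,(a\nabla v_0+\mathbf{b}v_0)\cdot\mathbf{n}-v_n\rangle_{\partial T}$; - $b(u,\lambda)=\sum_T(a\nabla_w u+\mathbf{b}u_0,\nabla\lambda)_T-\langle u_n,\lambda\rangle_{\partial T}$; - $c(\lambda,\sigma)=\tau_1\sum_T h_T^2(\nabla\lambda,\nabla\sigma)_T+\tau_2\sum_T h_T^4\sum_{i,j}(\partial^2_{ij}\lambda,\partial^2_{ij}\sigma)_T$, with $\tau_1,\tau_2\ge0$. Scheme. Find $(u_h;\lambda_h)\in W_h\times M_h$ with $u_b=Q_b^{(k)}g_1$ on $\Gamma_D$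 and $u_n=Q_n^{(l)}g_2$ on $\Gamma_N$ (these being $L^2$ projections onto $P_k(e)$ and $P_l(e)$) such that $$s(u_h,v)+b(v,\lambda_h)=0\quad\text{for all }v\in W_h^0,$$ $$-c(\lambda_h,\sigma)+b(u_h,\sigma)=(f,\sigma)\quad\text{for all }\sigma\in M_h.$$ *)

From HB Require Import structures.
From mathcomp Require Import all_boot all_order all_algebra.
From mathcomp Require Import all_classical all_reals all_analysis.
From mathcomp Require mpoly.

Set Implicit Arguments.
Unset Strict Implicit.
Unset Printing Implicit Defensive.

Import Order.TTheory GRing.Theory Num.Theory.
Local Open Scope classical_set_scope.
Local Open Scope ring_scope.

Section PDWG.
Variables (R : realType) (d : nat).

(* points of R^d, with the product (Borel) sigma-algebra on d-tuples of reals *)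
Definition Pt := d.-tuple R.
Definition vec := 'rV[R]_d.
Definition coords (x : Pt) : vec := \row_i tnth x i.
Definition dot (u v : vec) : R := \sum_i u 0 i * v 0 i.
Definition eucl_dist (x y : Pt) : R := Num.sqrt (dot (coords x - coords y) (coords x - coords y)).

(* polynomials in d variables; P_m is {p | mpoly.msize p <= m.+1} (total degree <= m) *)
Definition mpol := mpoly.mpoly d R.
(* msize p = 1 + total degree of p (0 for p = 0), written out as in mpoly.msizeE *)
Definition msize (p : mpol) : nat := (\max_(m <- mpoly.msupp p) (mpoly.mdeg m).+1)%N.
Definition degle (m : nat) (p : mpol) : Prop := (msize p <= m.+1)%N.
Definition ev (p : mpol) (x : Pt) : R := mpoly.meval (fun i => tnth x i) p.
Definition dpart (i : 'I_d) (p : mpol) : mpol := mpoly.mderiv i p.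

Record mesh := Mesh {
  elem : finType;
  face : finType;
  elset : elem -> set Pt;                 (* the closed element T *)
  fcset : face -> set Pt;                 (* the closed edge/face e *)
  onbd : elem -> face -> bool;            (* e is an edge/face of T, e ⊂ ∂T *)
  nrm : elem -> face -> vec;              (* unit outward normal of T on e *)
  isD : face -> bool;                     (* boundary face lying in Γ_D *)
  leb : {measure set Pt -> \bar R};
  srf : face -> {measure set Pt -> \bar R} (* (d-1)-dim. surface measure of e *)
}.

Variable M : mesh.

Definition Omega : set Pt := \bigcup_(T in [set: elem M]) elset T.
Definition hT (T : elem M) : R := sup [set eucl_dist x y | x in elset T & y in elset T].
Definition nb_elems (e : face M) : nat := #|[set T | onbd T e]|.
Definition interior_face (e : face M) : bool := nb_elems e == 2%N.
Definition boundary_face (e : face M) : bool := nb_elems e == 1%N.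
Definition faceD (e : face M) : bool := boundary_face e && isD e.
Definition faceN (e : face M) : bool := boundary_face e && ~~ isD e.

Definition intT (T : elem M) (g : Pt -> R) : R := Rintegral (leb M) (elset T) g.
Definition intF (e : face M) (g : Pt -> R) : R := Rintegral (srf e) (fcset e) g.

Definition mesh_ok : Prop :=
  [/\ (* leb is Lebesgue measure on R^d: boxes get their volume *)
      (forall a b : Pt, (forall i, tnth a i <= tnth b i) ->
         leb M [set x : Pt | forall i, tnth a i <= tnth x i <= tnth b i]
           = (\prod_i (tnth b i - tnth a i))%:E),
      (forall T : elem M, measurable (elset T)) /\
      (forall e : face M, measurable (fcset e) /\ srf e (~` fcset e) = 0%E),
      (forall e, interior_face e || boundary_face e),
      (forall (T : elem M) (e : face M), onbd T e -> fcset e `<=` elset T) &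
      (forall (T : elem M) (e : face M), onbd T e ->
         dot (nrm T e) (nrm T e) = 1 /\
         forall x y, fcset e x -> fcset e y -> dot (coords x - coords y) (nrm T e) = 0)].

Definition coef_ok (a : elem M -> 'M[R]_d) : Prop :=
  (forall T : elem M, (a T)^T = a T) /\
  exists alpha : R, 0 < alpha /\
    forall (T : elem M) (xi : vec), alpha * dot xi xi <= dot (xi *m a T) xi.

Definition flux (a : elem M -> 'M[R]_d) (b : elem M -> vec) (T : elem M) (p : mpol) (x : Pt) : vec :=
  \row_i (\sum_j a T i j * ev (dpart j p) x + b T 0 i * ev p x).

Record wfun := WFun {
  w0 : elem M -> mpol;
  wb : face M -> mpol;          (* v_b|_e (single-valued on e) *)
  wn : elem M -> face M -> mpol (* v_n|_e seen from ∂T *)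
}.

Definition inWh (k l : nat) (v : wfun) : Prop :=
  [/\ (forall T : elem M, degle k (w0 v T)),
      (forall e : face M, degle k (wb v e)),
      (forall (T : elem M) (e : face M), onbd T e -> degle l (wn v T e)) &
      (forall (e : face M) (T1 T2 : elem M), interior_face e -> T1 != T2 -> onbd T1 e -> onbd T2 e ->
         forall x, fcset e x -> ev (wn v T1 e) x = - ev (wn v T2 e) x)].

Definition inWh0 (k l : nat) (v : wfun) : Prop :=
  [/\ inWh k l v,
      (forall e : face M, faceD e -> forall x, fcset e x -> ev (wb v e) x = 0) &
      (forall (T : elem M) (e : face M), onbd T e -> faceN e -> forall x, fcset e x -> ev (wn v T e) x = 0)].

Definition inMh (k : nat) (lam : elem M -> mpol) : Prop := forall T : elem M, degle k (lam T).

(* weak gradient: G T i is the i-th component of ∇_w v|_T ∈ [P_{k-1}(T)]^d *)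
Definition is_wgrad (k : nat) (v : wfun) (G : elem M -> 'I_d -> mpol) : Prop :=
  forall T : elem M, (forall i, degle k.-1 (G T i)) /\
  forall psi : 'I_d -> mpol, (forall i, degle k.-1 (psi i)) ->
    intT T (fun x => \sum_i ev (G T i) x * ev (psi i) x)
    = - intT T (fun x => ev (w0 v T) x * \sum_i ev (dpart i (psi i)) x)
      + \sum_(e | onbd T e)
          intF e (fun x => ev (wb v e) x * \sum_i ev (psi i) x * nrm T e 0 i).

Definition sform (a : elem M -> 'M[R]_d) (b : elem M -> vec) (u v : wfun) : R :=
  \sum_(T : elem M) \sum_(e | onbd T e)
    ( (hT T) ^- 3 * intF e (fun x => (ev (w0 u T) x - ev (wb u e) x) *
                                    (ev (w0 v T) x - ev (wb v e) x))
    + (hT T)^-1 * intF e (fun x =>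
         (dot (flux a b T (w0 u T) x) (nrm T e) - ev (wn u T e) x) *
         (dot (flux a b T (w0 v T) x) (nrm T e) - ev (wn v T e) x))).

(* b(v, λ), using a weak gradient G of v *)
Definition bform (a : elem M -> 'M[R]_d) (b : elem M -> vec) (v : wfun) (G : elem M -> 'I_d -> mpol) (lam : elem M -> mpol) : R :=
  \sum_(T : elem M) ( intT T (fun x => \sum_i
               (\sum_j a T i j * ev (G T j) x + b T 0 i * ev (w0 v T) x) *
               ev (dpart i (lam T)) x)
         - \sum_(e | onbd T e) intF e (fun x => ev (wn v T e) x * ev (lam T) x)).

Definition cform (tau1 tau2 : R) (lam sig : elem M -> mpol) : R :=
  tau1 * \sum_(T : elem M) (hT T) ^+ 2 *
     intT T (fun x => \sum_i ev (dpart i (lam T)) x * ev (dpart i (sig T)) x)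
  + tau2 * \sum_(T : elem M) (hT T) ^+ 4 *
     intT T (fun x => \sum_i \sum_j ev (dpart i (dpart j (lam T))) x *
                                    ev (dpart i (dpart j (sig T))) x).

Definition l2pair (f : Pt -> R) (sig : elem M -> mpol) : R :=
  \sum_(T : elem M) intT T (fun x => f x * ev (sig T) x).

Definition L2 (f : Pt -> R) : Prop :=
  measurable_fun Omega f /\ (\int[leb M]_(x in Omega) ((f x) ^+ 2)%:E < +oo)%E.

(* boundary conditions u_b = Q_b^(k) g1 on Γ_D, u_n = Q_n^(l) g2 on Γ_N (L^2 projections) *)
Definition bc_ok (k l : nat) (g1 g2 : Pt -> R) (u : wfun) : Prop :=
  (forall e : face M, faceD e -> forall q, degle k q ->
     intF e (fun x => (ev (wb u e) x - g1 x) * ev q x) = 0) /\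
  (forall (T : elem M) (e : face M), onbd T e -> faceN e -> forall q, degle l q ->
     intF e (fun x => (ev (wn u T e) x - g2 x) * ev q x) = 0).

Definition pdwg_solution (k l : nat) (a : elem M -> 'M[R]_d) (b : elem M -> vec) (tau1 tau2 : R) (f g1 g2 : Pt -> R)
    (u : wfun) (lam : elem M -> mpol) : Prop :=
  [/\ inWh k l u, inMh k lam, bc_ok k l g1 g2 u,
      (forall v, inWh0 k l v -> forall Gv, is_wgrad k v Gv ->
          sform a b u v + bform a b v Gv lam = 0) &
      (exists Gu, is_wgrad k u Gu /\
         forall sig, inMh k sig ->
           - cform tau1 tau2 lam sig + bform a b u Gu sig = l2pair f sig)].

Definition Fh (u : wfun) (T : elem M) (e : face M) (x : Pt) : vec := ev (wn u T e) x *: nrm T e.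

End PDWG.

From HB Require Import structures.
From mathcomp Require Import all_boot all_order all_algebra.
From mathcomp Require Import all_classical all_reals all_analysis.
From mathcomp Require mpoly.
Import Order.TTheory GRing.Theory Num.Theory.
Local Open Scope classical_set_scope.
Local Open Scope ring_scope.

Set Implicit Arguments.
Unset Strict Implicit.

(* Normal continuity of F_h is the antisymmetry u_n|_{T1} = -u_n|_{T2} built
   into W_h, since n is a unit vector.  For local conservation, test the second
   equation of the scheme with the indicator function of T, which lies in M_h:
   its gradient vanishes, so the stabilizer c and the volume part of b drop out,
   and what remains is -int_{dT} u_n = int_T f. *)

Lemma Rintegral_eq0 (dm : measure_display) (T : measurableType dm) (R : realType)
    (mu : {measure set T -> \bar R}) (D : set T) (g : T -> R) :
  (forall x, g x = 0) -> Rintegral mu D g = 0.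
Proof.
move=> g0; rewrite (@eq_Rintegral _ _ _ _ _ (fun=> 0)) => [|x _]; last exact: g0.
by rewrite /Rintegral integral0.
Qed.

Lemma sum_eval_delta (I : finType) (S : pzRingType) (V : zmodType)
    (G : I -> S -> V) (i0 : I) :
  (forall i, G i 0 = 0) -> \sum_i G i (i == i0)%:R = G i0 1.
Proof.
move=> G0; rewrite (bigD1 i0) //= eqxx big1 ?addr0 // => i /negPf ->.
exact: G0.
Qed.

Section NumericalFlux.
Variables (R : realType) (d : nat) (M : mesh R d).

Lemma dotZl (c : R) (v w : vec R d) : dot (c *: v) w = c * dot v w.
Proof. by rewrite /dot mulr_sumr; apply: eq_bigr => i _; rewrite mxE mulrA. Qed.

Lemma Fh_dot_nrm (u : wfun M) (T : elem M) (e : face M) (x : Pt R d) :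
  dot (nrm T e) (nrm T e) = 1 -> dot (Fh u T e x) (nrm T e) = ev (wn u T e) x.
Proof. by move=> nrm1; rewrite /Fh dotZl nrm1 mulr1. Qed.

Lemma Fh_normal_continuous (k l : nat) (u : wfun M) :
  mesh_ok M -> inWh k l u ->
  forall (e : face M) (T1 T2 : elem M), interior_face e -> T1 != T2 ->
    onbd T1 e -> onbd T2 e ->
    forall x, fcset e x ->
      dot (Fh u T1 e x) (nrm T1 e) + dot (Fh u T2 e x) (nrm T2 e) = 0.
Proof.
move=> [_ _ _ _ unit_nrm] [_ _ _ un_antisym] e T1 T2 ie T12 T1e T2e x ex.
rewrite !Fh_dot_nrm ?(unit_nrm _ _ T1e).1 ?(unit_nrm _ _ T2e).1 //.
by rewrite (un_antisym e T1 T2) // addNr.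
Qed.

Definition pw_const (c : elem M -> R) : elem M -> mpol R d :=
  fun T => mpoly.mpolyC d (c T).

Section PiecewiseConstantTest.
Variable c : elem M -> R.

Lemma ev_pw_const T x : ev (pw_const c T) x = c T.
Proof. exact: mpoly.mevalC. Qed.

Lemma ev_dpart_pw_const T i x : ev (dpart i (pw_const c T)) x = 0.
Proof. by rewrite /ev /dpart mpoly.mderivC mpoly.meval0. Qed.

Lemma ev_dpart2_pw_const T i j x : ev (dpart i (dpart j (pw_const c T))) x = 0.
Proof. by rewrite /ev /dpart mpoly.mderivC mpoly.mderiv0 mpoly.meval0. Qed.

Lemma pw_const_inMh (k : nat) : inMh k (pw_const c).
Proof.
move=> T; rewrite /degle /msize mpoly.msuppC.
by case: eqP => _; rewrite ?big_nil // big_cons big_nil mpoly.mdeg0 maxn0.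
Qed.

Lemma cform_pw_const (tau1 tau2 : R) (lam : elem M -> mpol R d) :
  cform tau1 tau2 lam (pw_const c) = 0.
Proof.
rewrite /cform !big1 ?mulr0 ?addr0 // => T _; rewrite /intT Rintegral_eq0 ?mulr0 // => x.
- by rewrite big1 // => i _; rewrite big1 // => j _; rewrite ev_dpart2_pw_const mulr0.
- by rewrite big1 // => i _; rewrite ev_dpart_pw_const mulr0.
Qed.

Lemma bform_pw_const (a : elem M -> 'M[R]_d) (b : elem M -> vec R d)
    (v : wfun M) (G : elem M -> 'I_d -> mpol R d) :
  bform a b v G (pw_const c) =
  - \sum_T \sum_(e | onbd T e) intF e (fun x => ev (wn v T e) x * c T).
Proof.
rewrite /bform -sumrN; apply: eq_bigr => T _.
rewrite /intT Rintegral_eq0 ?sub0r => [|x]; last first.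
  by rewrite big1 // => i _; rewrite ev_dpart_pw_const mulr0.
congr (- _); apply: eq_bigr => e _.
by apply: eq_Rintegral => x _; rewrite ev_pw_const.
Qed.

Lemma l2pair_pw_const (f : Pt R d -> R) :
  l2pair f (pw_const c) = \sum_T intT T (fun x => f x * c T).
Proof.
by apply: eq_bigr => T _; apply: eq_Rintegral => x _; rewrite ev_pw_const.
Qed.

End PiecewiseConstantTest.

Lemma pdwg_local_conservation (k l : nat) (a : elem M -> 'M[R]_d) (b : elem M -> vec R d)
    (tau1 tau2 : R) (f g1 g2 : Pt R d -> R) (u : wfun M) (lam : elem M -> mpol R d) :
  pdwg_solution k l a b tau1 tau2 f g1 g2 u lam ->
  forall T, - \sum_(e | onbd T e) intF e (ev (wn u T e)) = intT T f.
Proof.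
move=> [_ _ _ _ [Gu [_ dual_eq]]] T.
have := dual_eq _ (pw_const_inMh (fun T' => (T' == T)%:R) k).
rewrite cform_pw_const oppr0 add0r bform_pw_const l2pair_pw_const.
rewrite (sum_eval_delta (G := fun T' r => \sum_(e | onbd T' e)
           intF e (fun x => ev (wn u T' e) x * r))); last first.
  by move=> T'; apply: big1 => e _; apply: Rintegral_eq0 => x; rewrite mulr0.
rewrite (sum_eval_delta (G := fun T' r => intT T' (fun x => f x * r))); last first.
  by move=> T'; apply: Rintegral_eq0 => x; rewrite mulr0.
rewrite /intT /intF; under eq_bigr do under eq_Rintegral do rewrite mulr1.
by under [X in _ = X -> _]eq_Rintegral do rewrite mulr1.
Qed.

End NumericalFlux.

Theorem theorem4p1 (R : realType) (d : nat) (M : mesh R d)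
    (a : elem M -> 'M[R]_d) (b : elem M -> vec R d)
    (k l : nat) (tau1 tau2 : R) (f g1 g2 : Pt R d -> R)
    (u : wfun M) (lam : elem M -> mpol R d) :
  (d == 2%N) || (d == 3%N) ->
  mesh_ok M ->
  coef_ok a ->
  (1 <= k)%N -> (l == k.-1) || (l == k) ->
  0 <= tau1 -> 0 <= tau2 ->
  L2 M f ->
  pdwg_solution k l a b tau1 tau2 f g1 g2 u lam ->
  (forall (e : face M) (T1 T2 : elem M), interior_face e -> T1 != T2 ->
     onbd T1 e -> onbd T2 e ->
     forall x, fcset e x ->
       dot (Fh u T1 e x) (nrm T1 e) + dot (Fh u T2 e x) (nrm T2 e) = 0)
  /\
  (forall T : elem M,
     - \sum_(e | onbd T e) intF e (fun x => dot (Fh u T e x) (nrm T e))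
     = intT T f).
Proof.
move=> _ meshM _ _ _ _ _ _ sol; have [uWh _ _ _ _] := sol.
split; first exact: Fh_normal_continuous meshM uWh.
move=> T; rewrite -(pdwg_local_conservation sol T).
have [_ _ _ _ unit_nrm] := meshM.
congr (- _); apply: eq_bigr => e Te; apply: eq_Rintegral => x _.
exact/Fh_dot_nrm/(unit_nrm _ _ Te).1.
Qed.
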